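(* For every integer $n\ge3$, if $T$ is a uniformly random standard Young tableau of shape $(n,n,n)$, then $$\Pr(T_{1,3}=7)=\frac{5n(n+1)^2(n+2)}{9(3n-1)(3n-2)(3n-4)(3n-5)}.$$
   Context: A standard Young tableau of shape $(n,n,n)$ is a bijective filling $T$ of the cells $[a,b]$ ($1\le a\le 3$, $1\le b\le n$; row $a$, column $b$) by $\{1,\dots,3n\}$ that increases along each row and down each column. $T_{a,b}$ denotes the entry in cell $[a,b]$. *)

From HB Require Import structures.
From mathcomp Require Import all_boot all_order all_algebra.
Set Implicit Arguments. Unset Strict Implicit. Unset Printing Implicit Defensive.

(* Cell [a,b] (1 <= a <= 3, 1 <= b <= n) is encoded as (a-1, b-1) : 'I_3 * 'I_n,
   and the ordinal value k : 'I_(3*n) encodes the entry k+1 in {1,...,3n}. *)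

Definition filling (n : nat) := {ffun 'I_3 * 'I_n -> 'I_(3 * n)}.

(* The entry T_{a,b} as a number in {1,...,3n} (a, b are 1-based cell coordinates;
   cells out of range are not used). *)
Definition entry n (T : filling n) (a b : nat) : nat :=
  match insub a.-1, insub b.-1 with
  | Some i, Some j => (T (i, j)).+1
  | _, _ => 0
  end.

Definition is_SYT n (T : filling n) : bool :=
  [&& injectiveb T,
      [forall k : 'I_(3 * n), exists c, T c == k],
      [forall a : 'I_3, forall b : 'I_n, forall b' : 'I_n,
          (b < b')%N ==> (T (a, b) < T (a, b'))%N] &
      [forall a : 'I_3, forall a' : 'I_3, forall b : 'I_n,
          (a < a')%N ==> (T (a, b) < T (a', b))%N]].

Definition prob_SYT n (P : pred (filling n)) : rat :=
  (#|[set T : filling n | is_SYT T && P T]|%:R / #|[set T : filling n | is_SYT T]|%:R)%R.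

From mathcomp Require Import all_boot all_order all_algebra.
From mathcomp Require Import zify ring.
Set Implicit Arguments. Unset Strict Implicit. Unset Printing Implicit Defensive.
Import GRing.Theory Num.Theory.

(* A tableau T is encoded by its Yamanouchi word word T, whose j-th letter (j < 3n)
   is the row of the entry j+1.  These words are exactly the ballot words with n
   letters of each kind 0, 1, 2, and T |-> word T is a bijection onto them; its
   inverse tableau_of puts the b-th occurrence of the letter a into cell (a, b).
   Ballot words are the words accepted by a counting automaton whose state
   (x0, d1, d2) records the number of 0's still to come and the current surpluses
   #0 - #1 and #1 - #2.  The number nwords st m of accepted words of length
   m = 3 x0 + 2 d1 + d2 from state st satisfies a hook-length formula
   (nwords_formula), proved by induction on m along the first letter.

   The event T_{1,3} = 7 says that the 7th letter of word T is its third 0.  Exactly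
   five 7-letter prefixes are compatible with it (a finite computation), and each
   leads the automaton to the state (n-3, 1, 0).  So the event contains
   5 * nwords (n-3,1,0) (3n-7) tableaux out of nwords (n,0,0) (3n), and the
   hook-length formula evaluates this ratio. *)

(* A state (x0, d1, d2): x0 letters 0 are still to be read, and d1 (resp. d2) more
   letters 1 (resp. 2) may be read before another letter 0 (resp. 1) is needed. *)
Definition state := (nat * nat * nat)%type.

Definition step (st : state) (i : nat) : option state :=
  let: (x0, d1, d2) := st in
  match i with
  | 0 => if 0 < x0 then Some (x0.-1, d1.+1, d2) else None
  | 1 => if 0 < d1 then Some (x0, d1.-1, d2.+1) else None
  | 2 => if 0 < d2 then Some (x0, d1, d2.-1) else None
  | _ => None
  end.

Fixpoint run (st : state) (w : seq nat) : option state :=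
  if w is i :: w' then (if step st i is Some st' then run st' w' else None)
  else Some st.

Definition accepts (st : state) (w : seq nat) : bool := run st w == Some (0, 0, 0).

Lemma run_cons st i w :
  run st (i :: w) = if step st i is Some st' then run st' w else None.
Proof. by []. Qed.

Lemma run_cat st u v :
  run st (u ++ v) = if run st u is Some st' then run st' v else None.
Proof. by elim: u st => [|i u IH] st //=; case: step. Qed.

Fixpoint all_words m : seq (seq nat) :=
  if m is m'.+1 then [seq i :: w | i <- [:: 0; 1; 2], w <- all_words m'] else [:: [::]].

Lemma mem_all_words m w : (w \in all_words m) = (size w == m) && all (fun i => i < 3) w.
Proof.
elim: m w => [|m IH] w; first by case: w.
apply/allpairsP/idP => [[[i u] [/= i3 u_m ->]]|].
  by move: u_m i3; rewrite /= IH eqSS !inE => /andP[-> ->] /or3P[] /eqP->.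
case: w => [|i w] //= /and3P[w_m i3 w3]; exists (i, w); split=> //=; last by rewrite IH -eqSS w_m.
by rewrite !inE; case: i i3 => [|[|[|]]].
Qed.

Lemma all_words_uniq m : uniq (all_words m).
Proof. by elim: m => // m IH; rewrite allpairs_uniq // => -[i u] [j v] _ _ [-> ->]. Qed.

Lemma count_all_wordsS (p : pred (seq nat)) m :
  count p (all_words m.+1) = count (fun w => p (0 :: w)) (all_words m)
    + count (fun w => p (1 :: w)) (all_words m) + count (fun w => p (2 :: w)) (all_words m).
Proof. by rewrite /= cats0 !count_cat !count_map addnA. Qed.

Lemma count_all_words_cat (p : pred (seq nat)) m1 m2 :
  count p (all_words (m1 + m2)) =
  \sum_(u <- all_words m1) count (fun v => p (u ++ v)) (all_words m2).
Proof.
elim: m1 p => [|m1 IH] p; first by rewrite big_seq1.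
by rewrite addSn count_all_wordsS !IH /= cats0 !big_cat !big_map /= addnA.
Qed.

Definition occ (i : nat) (u : seq nat) : nat := count (pred1 i) u.

Definition feasible (st : state) (u : seq nat) : bool :=
  let: (x0, d1, d2) := st in
  [&& occ 0 u <= x0, occ 1 u <= d1 + occ 0 u & occ 2 u <= d2 + occ 1 u].

Definition exhausts (st : state) (u : seq nat) : bool :=
  let: (x0, d1, d2) := st in
  [&& occ 0 u == x0, occ 1 u == x0 + d1 & occ 2 u == x0 + d1 + d2].

Arguments feasible : simpl never.
Arguments exhausts : simpl never.

Lemma feasible_nil st : feasible st [::].
Proof. by case: st => [[x0 d1] d2]. Qed.

Lemma step_some st i st' : step st i = Some st' ->
  [/\ i < 3, forall u, feasible st (i :: u) = feasible st' u
          & forall u, exhausts st (i :: u) = exhausts st' u].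
Proof.
case: st => [[x0 d1] d2]; rewrite /feasible /exhausts /occ.
case: i => [|[|[|i]]] //=; [case: x0 | case: d1 | case: d2] => // x [<-] /=;
  split=> // u; apply/idP/idP; lia.
Qed.

Lemma step_none st i : step st i = None -> i < 3 -> feasible st [:: i] = false.
Proof.
case: st => [[x0 d1] d2]; rewrite /feasible /occ.
by case: i => [|[|[|i]]] //=; [case: x0 | case: d1 | case: d2].
Qed.

Lemma acceptsP st w : accepts st w <->
  [/\ all (fun i => i < 3) w, forall k, feasible st (take k w) & exhausts st w].
Proof.
elim: w st => [|i w IH] [[x0 d1] d2].
  rewrite /accepts /exhausts /feasible /occ /=; split=> [/eqP [-> -> ->] //|].
  case=> _ _ /and3P[/eqP <- /eqP d1_0 /eqP d2_0].
  by have [<- <-] : 0 = d1 /\ 0 = d2 by lia.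
rewrite /accepts run_cons; case st_i: step => [st'|]; last first.
  by split=> // -[/andP[i3 _] /(_ 1)]; rewrite /= take0 step_none.
have [i3 feasible_cons exhausts_cons] := step_some st_i.
rewrite -/(accepts st' w) IH /= i3 exhausts_cons.
split=> -[w3 w_feasible w_exhausts]; split=> // k.
- by case: k => [|k] /=; [exact: feasible_nil | rewrite feasible_cons].
- by have := w_feasible k.+1; rewrite /= feasible_cons.
Qed.

Definition nwords (st : state) (m : nat) : nat := count (accepts st) (all_words m).

Definition nwords_after (st : state) (i m : nat) : nat :=
  if step st i is Some st' then nwords st' m else 0.

Lemma nwordsS st m :
  nwords st m.+1 = nwords_after st 0 m + nwords_after st 1 m + nwords_after st 2 m.
Proof.
have first_letter i : count (fun w => accepts st (i :: w)) (all_words m) = nwords_after st i m.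
  under eq_count do rewrite /accepts run_cons.
  by rewrite /nwords_after; case: step => [st'|] //; elim: (all_words m).
by rewrite /nwords count_all_wordsS !first_letter.
Qed.

(* The counting formula: from state (x0, d1, d2), with m = 3 x0 + 2 d1 + d2,
   nwords = m! * hook_num d1 d2 / hook_den x0 d1 d2, which is the hook-length formula
   for the number of standard Young tableaux of shape (x0 + d1 + d2, x0 + d1, x0). *)
Definition hook_den (x0 d1 d2 : nat) : nat :=
  (x0 + d1 + d2 + 2)`! * (x0 + d1 + 1)`! * x0`!.

Definition hook_num (d1 d2 : nat) : nat := (d1 + 1) * (d2 + 1) * (d1 + d2 + 2).

Lemma hook_den_step x0 d1 d2 :
  [/\ hook_den x0.+1 d1 d2 = x0.+1 * hook_den x0 d1.+1 d2,
      hook_den x0 d1.+1 d2 = (x0 + d1 + 2) * hook_den x0 d1 d2.+1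
    & hook_den x0 d1 d2.+1 = (x0 + d1 + d2 + 3) * hook_den x0 d1 d2].
Proof.
rewrite /hook_den !addSn !addnS !factS.
by split; ring.
Qed.

(* The hook-length formula, by induction on m: the three transitions contribute
   x0 * hook_num (d1+1) d2, (x0+d1+1) * hook_num (d1-1) (d2+1) and
   (x0+d1+d2+2) * hook_num d1 (d2-1) (times m!), and these add up to
   (m+1) * hook_num d1 d2. *)
Lemma nwords_formula m x0 d1 d2 : m = 3 * x0 + 2 * d1 + d2 ->
  nwords (x0, d1, d2) m * hook_den x0 d1 d2 = m`! * hook_num d1 d2.
Proof.
elim: m x0 d1 d2 => [|m IH] x0 d1 d2 Hm.
  by have [-> [-> ->]] : x0 = 0 /\ d1 = 0 /\ d2 = 0 by lia.
have scale a b c d e : a * b = c * d -> a * (e * b) = c * (e * d).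
  by move=> E; rewrite mulnCA E mulnCA.
have E0 : nwords_after (x0, d1, d2) 0 m * hook_den x0 d1 d2 =
          m`! * (x0 * hook_num d1.+1 d2).
  case: x0 Hm => [|x] Hm; first by rewrite /= !muln0.
  by have [-> _ _] := hook_den_step x d1 d2; apply/scale/IH; lia.
have E1 : nwords_after (x0, d1, d2) 1 m * hook_den x0 d1 d2 =
          m`! * (if d1 is b.+1 then (x0 + b + 2) * hook_num b d2.+1 else 0).
  case: d1 Hm {E0} => [|b] Hm; first by rewrite /= !muln0.
  by have [_ -> _] := hook_den_step x0 b d2; apply/scale/IH; lia.
have E2 : nwords_after (x0, d1, d2) 2 m * hook_den x0 d1 d2 =
          m`! * (if d2 is c.+1 then (x0 + d1 + c + 3) * hook_num d1 c else 0).
  case: d2 Hm {E0 E1} => [|c] Hm; first by rewrite /= !muln0.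
  by have [_ _ ->] := hook_den_step x0 d1 c; apply/scale/IH; lia.
rewrite nwordsS !(mulnDl _ _ (hook_den _ _ _)) E0 E1 E2 factS Hm /hook_num -!mulnDr.
by case: d1 {E0 E1 E2 Hm} => [|b]; case: d2 => [|c]; ring.
Qed.

Lemma run_shift k x0 d1 d2 u : occ 0 u <= x0 ->
  run (x0 + k, d1, d2) u =
  omap (fun st : state => (st.1.1 + k, st.1.2, st.2)) (run (x0, d1, d2) u).
Proof.
elim: u x0 d1 d2 => [|i u IH] x0 d1 d2 //=; rewrite /occ /=.
case: i => [|[|[|i]]] //= u_x0.
- by case: x0 u_x0 => [|x0] //= u_x0; apply: IH.
- by case: d1 => [|d1] //=; apply: IH.
- by case: d2 => [|d2] //=; apply: IH.
Qed.

Definition third_zero_at_7 (w : seq nat) : bool :=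
  (nth 0 w 6 == 0) && (occ 0 (take 6 w) == 2).

Lemma third_zero_at_7_cat u v : size u = 7 -> third_zero_at_7 (u ++ v) = third_zero_at_7 u.
Proof. by move=> su; rewrite /third_zero_at_7 nth_cat take_cat su. Qed.

Lemma third_zero_at_7_occ u : size u = 7 -> third_zero_at_7 u -> occ 0 u = 3.
Proof.
move=> su /andP[/eqP u6 /eqP u_2].
by rewrite -(take_size u) su (take_nth 0) ?su // -cats1 /occ count_cat -/(occ 0 _) u_2 u6.
Qed.

(* The 7-letter prefixes realizing the event: there are five of them (the standard
   fillings of the shape (2,2,2) followed by a 0), all ending in the state (0,1,0). *)
Definition admissible_prefix (u : seq nat) : bool :=
  third_zero_at_7 u && (run (3, 0, 0) u != None).

Lemma admissible_prefixes :
  [seq run (3, 0, 0) u | u <- all_words 7 & admissible_prefix u] = nseq 5 (Some (0, 1, 0)).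
Proof. by vm_compute. Qed.

Lemma event_count k :
  count (fun w => accepts (k + 3, 0, 0) w && third_zero_at_7 w) (all_words (3 * (k + 3))) =
  5 * nwords (k, 1, 0) (3 * k + 2).
Proof.
pose after_prefix (o : option state) :=
  if o is Some st then nwords (st.1.1 + k, st.1.2, st.2) (3 * k + 2) else 0.
have split_prefix u : u \in all_words 7 ->
    count (fun v => accepts (k + 3, 0, 0) (u ++ v) && third_zero_at_7 (u ++ v))
          (all_words (3 * k + 2)) =
    if admissible_prefix u then after_prefix (run (3, 0, 0) u) else 0.
  rewrite mem_all_words => /andP[/eqP su _].
  under eq_count do rewrite third_zero_at_7_cat // /accepts run_cat.
  rewrite /admissible_prefix; case Qu: (third_zero_at_7 u) => /=; last first.
    by under eq_count do rewrite andbF; elim: (all_words _).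
  under eq_count do rewrite andbT.
  rewrite addnC run_shift ?third_zero_at_7_occ //.
  by case: (run _ u) => [st|] //=; elim: (all_words _).
rewrite (_ : 3 * (k + 3) = 7 + (3 * k + 2)); last by lia.
rewrite count_all_words_cat big_seq (eq_bigr _ split_prefix) -big_seq -big_mkcond.
rewrite -big_filter -(big_map _ xpredT) admissible_prefixes /= !big_cons big_nil.
by rewrite /after_prefix /= add0n; lia.
Qed.

Lemma occ_take_mono a s i j : i <= j -> occ a (take i s) <= occ a (take j s).
Proof. by move=> ij; rewrite -(take_takel s ij); apply/leq_count_subseq/take_subseq. Qed.

Lemma occ_take_le a s k : occ a (take k s) <= occ a s.
Proof. exact/leq_count_subseq/take_subseq. Qed.

Definition ballot (n : nat) (w : seq nat) : Prop :=
  [/\ all (fun i => i < 3) w, forall a, a < 3 -> occ a w = n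
    & forall a a' k, a < a' < 3 -> occ a' (take k w) <= occ a (take k w)].

Lemma accepts_ballot n w : accepts (n, 0, 0) w <-> ballot n w.
Proof.
rewrite acceptsP /feasible /exhausts /= !addn0; split.
  case=> w3 w_feasible /and3P[/eqP w0 /eqP w1 /eqP w2].
  split=> // [[|[|[|a]]] _|a a' k a_a'] //.
  by have /and3P[_ le10 le21] := w_feasible k; case: a a' a_a' => [|[|[|a]]] [|[|[|a']]]; lia.
case=> w3 w_n le_prefix; split=> // [k|]; last by rewrite (w_n 0) ?(w_n 1) ?(w_n 2) ?eqxx.
have := occ_take_le 0 w k; rewrite w_n // => le0.
by rewrite le0 !add0n !le_prefix.
Qed.

Lemma card_ord_lt m (b : 'I_m) : #|[set b' : 'I_m | b' < b]| = b.
Proof.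
have b_m : b <= m := ltnW (ltn_ord b).
rewrite (_ : [set b' : 'I_m | b' < b] = widen_ord b_m @: [set: 'I_b]); last first.
  apply/setP => x; rewrite inE; apply/idP/imsetP => [x_b|[y _ ->]]; last exact: (ltn_ord y).
  by exists (Ordinal x_b) => //; apply: val_inj.
by rewrite card_imset ?cardsT ?card_ord // => y z /(congr1 val) /= /val_inj.
Qed.

Lemma SYT_spec n (T : filling n) : is_SYT T ->
  [/\ injective T, forall k, exists c, T c = k,
      forall a (b b' : 'I_n), b < b' -> T (a, b) < T (a, b')
    & forall (a a' : 'I_3) b, a < a' -> T (a, b) < T (a', b)].
Proof.
case/and4P => /injectiveP T_inj /forallP T_surj /forallP T_row /forallP T_col.
split=> // [k | a b b' | a a' b].
- by have /existsP [c /eqP] := T_surj k; exists c.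
- by have /forallP/(_ b)/forallP/(_ b')/implyP := T_row a.
- by have /forallP/(_ a')/forallP/(_ b)/implyP := T_col a.
Qed.

Definition rowof n (T : filling n) (j : nat) : nat :=
  if [pick c | val (T c) == j] is Some c then val c.1 else 0.

Definition word n (T : filling n) : seq nat := mkseq (rowof T) (3 * n).

Lemma size_word n (T : filling n) : size (word T) = 3 * n.
Proof. exact: size_mkseq. Qed.

Lemma nth_word n (T : filling n) j : j < 3 * n -> nth 0 (word T) j = rowof T j.
Proof. exact: nth_mkseq. Qed.

Section WordOfTableau.

Variables (n : nat) (T : filling n).
Hypothesis T_SYT : is_SYT T.

Lemma rowof_cell c : rowof T (T c) = c.1.
Proof.
have [T_inj _ _ _] := SYT_spec T_SYT; rewrite /rowof.
case: pickP => [c' /eqP /val_inj /T_inj -> //|/(_ c)]; by rewrite eqxx.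
Qed.

Lemma card_row_before a b : #|[set b' | T (a, b') < T (a, b)]| = b.
Proof.
have [_ _ T_row _] := SYT_spec T_SYT.
rewrite -[RHS](card_ord_lt b); apply: eq_card => b'; rewrite !inE.
case: (ltngtP b' b) => [b'_b | b_b' | /val_inj ->]; [exact: T_row | | by rewrite ltnn].
by rewrite ltnNge ltnW // T_row.
Qed.

Lemma card_cell_at a j : j < 3 * n -> #|[set b | val (T (a, b)) == j]| = (rowof T j == a).
Proof.
have [T_inj T_surj _ _] := SYT_spec T_SYT.
move=> j_n; have [[a' b'] Tc] := T_surj (Ordinal j_n).
have -> : [set b | val (T (a, b)) == j] = if a' == a then [set b'] else set0.
  apply/setP => b; rewrite -[j]/(val (Ordinal j_n)) -Tc.
  case: eqP => [<-|ne]; rewrite !inE (inj_eq val_inj) (inj_eq T_inj) ?xpair_eqE ?eqxx //.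
  by case: eqP => // a_a'; case: ne.
rewrite -[j]/(val (Ordinal j_n)) -Tc rowof_cell (inj_eq val_inj).
by case: eqP; rewrite ?cards1 ?cards0.
Qed.

Lemma occ_prefix_word (a : 'I_3) k : occ a (take k (word T)) = #|[set b | T (a, b) < k]|.
Proof.
elim: k => [|k IH].
  by rewrite take0; apply/esym/eqP; rewrite cards_eq0; apply/eqP/setP => b; rewrite !inE.
have [k_n|n_k] := ltnP k (3 * n); last first.
  rewrite !take_oversize ?size_word // 1?ltnW // in IH *; rewrite IH.
  by apply: eq_card => b; rewrite !inE; have := ltn_ord (T (a, b)); lia.
rewrite (take_nth 0) ?size_word // -cats1 /occ count_cat -/(occ _ _) IH nth_word //= addn0.
rewrite -card_cell_at // (_ : [set b | T (a, b) < k.+1] =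
  [set b | T (a, b) < k] :|: [set b | val (T (a, b)) == k]); last first.
  by apply/setP => b; rewrite !inE ltnS leq_eqVlt orbC.
apply/esym/eqP; rewrite (leq_card_setU _ _).2.
by rewrite disjoint_subset; apply/subsetP => b; rewrite !inE => T_k; rewrite neq_ltn T_k.
Qed.

Lemma word_ballot : ballot n (word T).
Proof.
have [_ _ _ T_col] := SYT_spec T_SYT.
have occ_word (a : 'I_3) : occ a (word T) = n.
  rewrite -(take_size (word T)) occ_prefix_word size_word -[RHS]card_ord.
  by apply: eq_card => b; rewrite !inE ltn_ord.
split=> [|a a3|a a' k /andP[a_a' a'3]].
- by apply/allP => _ /mapP[j _ ->]; rewrite /rowof; case: pickP => // c _; exact: ltn_ord.
- exact: (occ_word (Ordinal a3)).
- have a3 := ltn_trans a_a' a'3.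
  rewrite -[a]/(val (Ordinal a3)) -[a']/(val (Ordinal a'3)) !occ_prefix_word.
  apply/subset_leq_card/subsetP => b; rewrite !inE; apply: ltn_trans; exact: T_col.
Qed.

End WordOfTableau.

(* occ_pos s a b: the position of the (b+1)-th occurrence of the letter a in s. *)
Fixpoint occ_pos (s : seq nat) (a b : nat) : nat :=
  if s is x :: s' then
    if x == a then (if b is b'.+1 then (occ_pos s' a b').+1 else 0)
    else (occ_pos s' a b).+1
  else 0.

Lemma occ_posP s a b : b < occ a s ->
  [/\ occ_pos s a b < size s, nth 0 s (occ_pos s a b) = a & occ a (take (occ_pos s a b) s) = b].
Proof.
rewrite /occ; elim: s b => [|x s IH] b //=.
case: eqP => [->|x_a] /=.
  case: b => [|b]; rewrite ?add1n ?ltnS // => /IH[lt_s nth_s occ_s].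
  by rewrite /= eqxx lt_s nth_s occ_s.
rewrite add0n => /IH[lt_s nth_s occ_s]; rewrite nth_s occ_s.
by case: eqP x_a => // _ _; split.
Qed.

Lemma occ_pos_take s j : j < size s -> occ_pos s (nth 0 s j) (occ (nth 0 s j) (take j s)) = j.
Proof.
rewrite /occ; elim: s j => [|x s IH] [|j] //=; first by rewrite eqxx.
by rewrite ltnS => /IH occ_j; case: eqP => _; rewrite ?add0n ?add1n occ_j.
Qed.

Lemma occ_take_succ a s j : j < size s ->
  occ a (take j.+1 s) = occ a (take j s) + (nth 0 s j == a).
Proof. by move=> js; rewrite (take_nth 0 js) -cats1 /occ count_cat /= addn0. Qed.

(* The inverse of word: the cell (a, b) receives the position of the (b+1)-th letter
   a of w (the default value is never used when w is a ballot word of length 3n). *)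
Definition tableau_of n (w : seq nat) : filling n :=
  [ffun c : 'I_3 * 'I_n =>
     insubd (widen_ord (leq_pmull n (isT : 0 < 3)) c.2) (occ_pos w c.1 c.2)].

Section TableauOfWord.

Variables (n : nat) (w : seq nat).
Hypotheses (w_ballot : ballot n w) (w_size : size w = 3 * n).

Local Notation T := (tableau_of n w).

Lemma tableau_of_cell c :
  [/\ T c = occ_pos w c.1 c.2 :> nat, nth 0 w (T c) = c.1 & occ c.1 (take (T c) w) = c.2].
Proof.
have [_ w_n _] := w_ballot.
have c_occ : c.2 < occ c.1 w by rewrite w_n.
have [lt_w nth_w occ_w] := occ_posP c_occ.
have T_c : T c = occ_pos w c.1 c.2 :> nat by rewrite ffunE insubdK // -w_size.
by rewrite T_c.
Qed.

Lemma tableau_of_inj : injective T.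
Proof.
move=> [a b] [a' b'] Tc.
have [_ /= nth_c occ_c] := tableau_of_cell (a, b).
have [_ /= nth_c' occ_c'] := tableau_of_cell (a', b').
have a_a' : a = a' by apply: ord_inj; rewrite -nth_c -nth_c' Tc.
have b_b' : b = b' by apply: ord_inj; rewrite -occ_c -occ_c' Tc a_a'.
by rewrite a_a' b_b'.
Qed.

Lemma tableau_of_onto j : j < 3 * n -> exists c, val (T c) = j.
Proof.
have [w3 w_n _] := w_ballot; move=> j_n; have j_w : j < size w by rewrite w_size.
set a := nth 0 w j; have a3 : a < 3 := allP w3 _ (mem_nth 0 j_w).
have b_n : occ a (take j w) < n.
  by have := occ_take_le a w j.+1; rewrite occ_take_succ // eqxx addn1 (w_n a a3).
exists (Ordinal a3, Ordinal b_n); rewrite ffunE insubdK /= occ_pos_take // -w_size.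
Qed.

(* Rows increase since occurrences are numbered left to right, and columns increase
   by the ballot condition. *)
Lemma tableau_of_SYT : is_SYT T.
Proof.
have [_ _ w_col] := w_ballot.
apply/and4P; split.
- exact/injectiveP/tableau_of_inj.
- apply/forallP => k; have [c Tc] := tableau_of_onto (ltn_ord k).
  by apply/existsP; exists c; apply/eqP/val_inj.
- apply/forallP => a; apply/forallP => b; apply/forallP => b'; apply/implyP => b_b'.
  have [_ _ occ_b] := tableau_of_cell (a, b); have [_ _ occ_b'] := tableau_of_cell (a, b').
  rewrite ltnNge; apply/negP => /(occ_take_mono a w); rewrite occ_b occ_b' /=.
  by rewrite leqNgt b_b'.
- apply/forallP => a; apply/forallP => a'; apply/forallP => b; apply/implyP => a_a'.
  have [_ _ occ_b] := tableau_of_cell (a, b); have [_ nth_b' occ_b'] := tableau_of_cell (a', b).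
  rewrite ltnNge; apply/negP => le_T.
  have T_w : T (a', b) < size w by rewrite w_size.
  have := w_col a a' (T (a', b)).+1; rewrite a_a' ltn_ord => /(_ isT).
  rewrite !occ_take_succ // nth_b' occ_b' eqxx eq_sym (ltn_eqF a_a') addn0.
  by have := occ_take_mono a w le_T; rewrite occ_b /=; lia.
Qed.

Lemma word_tableau_of : word T = w.
Proof.
apply: (@eq_from_nth _ 0) => [|j]; rewrite size_word ?w_size // => j_n.
have [c Tc] := tableau_of_onto j_n; have [_ nth_c _] := tableau_of_cell c.
by rewrite nth_word // -Tc (rowof_cell tableau_of_SYT) nth_c.
Qed.

End TableauOfWord.

Lemma tableau_of_word n (T : filling n) : is_SYT T -> tableau_of n (word T) = T.
Proof.
move=> T_SYT; apply/ffunP => -[a b]; apply: ord_inj.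
have [-> _ _] := tableau_of_cell (word_ballot T_SYT) (size_word T) (a, b).
have nth_ab : nth 0 (word T) (T (a, b)) = a by rewrite nth_word // rowof_cell.
have occ_ab : occ a (take (T (a, b)) (word T)) = b.
  by rewrite occ_prefix_word // card_row_before.
by rewrite /= -occ_ab -nth_ab occ_pos_take // size_word.
Qed.

Lemma occ_pos_eq s a b j : b < occ a s -> j < size s ->
  (occ_pos s a b == j) = (nth 0 s j == a) && (occ a (take j s) == b).
Proof.
move=> b_occ j_s; apply/eqP/andP => [<-|[/eqP <- /eqP <-]]; last exact: occ_pos_take.
by have [_ -> ->] := occ_posP b_occ.
Qed.

Lemma entry_1_3 n (T : filling n) (n3 : 2 < n) : entry T 1 3 = (T (ord0, Ordinal n3)).+1.
Proof.
rewrite /entry /= (insubT (fun i => i < 3) (isT : 0 < 3)) (insubT (fun j => j < n) n3).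
by congr (T (_, _)).+1; apply: val_inj.
Qed.

(* T_{1,3} = 7 means that the entry 6 (0-based) is the third cell of row 0. *)
Lemma entry_event n (T : filling n) : 3 <= n -> is_SYT T ->
  (entry T 1 3 == 7) = third_zero_at_7 (word T).
Proof.
move=> n_gt2 T_SYT; have [_ w_n _] := word_ballot T_SYT.
have [T_c _ _] := tableau_of_cell (word_ballot T_SYT) (size_word T) (ord0, Ordinal n_gt2).
rewrite tableau_of_word // in T_c.
by rewrite entry_1_3 eqSS T_c occ_pos_eq ?w_n ?size_word //; lia.
Qed.

Lemma card_SYT_words n (P : pred (filling n)) (Q : pred (seq nat)) :
  (forall T, is_SYT T -> P T = Q (word T)) ->
  #|[set T | is_SYT T && P T]| = count (fun w => accepts (n, 0, 0) w && Q w) (all_words (3 * n)).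
Proof.
move=> PQ; rewrite cardE -(size_map (@word n)) -size_filter.
apply/perm_size/uniq_perm.
- rewrite map_inj_in_uniq ?enum_uniq // => T T'.
  rewrite !mem_enum !inE => /andP[T_SYT _] /andP[T'_SYT _] eq_w.
  by rewrite -(tableau_of_word T_SYT) eq_w tableau_of_word.
- exact/filter_uniq/all_words_uniq.
move=> w; rewrite mem_filter mem_all_words; apply/mapP/idP.
- case=> T; rewrite mem_enum inE => /andP[T_SYT PT] ->.
  have [w3 _ _] := word_ballot T_SYT.
  by rewrite -PQ // PT size_word eqxx w3 !andbT; apply/accepts_ballot/word_ballot.
- case/and3P=> /andP[/accepts_ballot w_ballot Qw] /eqP w_size _.
  exists (tableau_of n w); last by rewrite word_tableau_of.
  by rewrite mem_enum inE tableau_of_SYT // PQ ?tableau_of_SYT // word_tableau_of.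
Qed.

Lemma nwords_SYT n : nwords (n, 0, 0) (3 * n) * ((n + 2)`! * (n + 1)`! * n`!) = 2 * (3 * n)`!.
Proof.
have -> : (n + 2)`! * (n + 1)`! * n`! = hook_den n 0 0 by rewrite /hook_den !addn0.
by rewrite nwords_formula 1?mulnC // muln0 !addn0.
Qed.

Lemma nwords_SYT_neq0 n : nwords (n, 0, 0) (3 * n) != 0.
Proof.
apply/eqP => nwords0; have := nwords_SYT n; rewrite nwords0 mul0n => /esym/eqP.
by rewrite muln_eq0 /= eqn0Ngt fact_gt0.
Qed.

Lemma nwords_completions k :
  nwords (k, 1, 0) (3 * k + 2) * ((k + 3)`! * (k + 2)`! * k`!) = 6 * (3 * k + 2)`!.
Proof.
have -> : (k + 3)`! * (k + 2)`! * k`! = hook_den k 1 0.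
  by rewrite /hook_den addn0 -[k + 1 + 2]addnA -[k + 1 + 1]addnA.
by rewrite nwords_formula 1?mulnC // muln1 addn0.
Qed.

Lemma nwords_ratio k :
  5 * nwords (k, 1, 0) (3 * k + 2) *
    (9 * (3 * (k + 3) - 1) * (3 * (k + 3) - 2) * (3 * (k + 3) - 4) * (3 * (k + 3) - 5)) =
  5 * (k + 3) * (k + 3 + 1) ^ 2 * (k + 3 + 2) * nwords (k + 3, 0, 0) (3 * (k + 3)).
Proof.
have countA := nwords_completions k; have countB := nwords_SYT (k + 3).
move: countA countB; set cA := nwords _ _; set cB := nwords _ _.
set dA := _ * _ * k`!; set dB := _ * _ * (k + 3)`! => countA countB.
have d_gt0 : 0 < dA * dB by rewrite !muln_gt0 !fact_gt0.
apply/eqP; rewrite -(eqn_pmul2r d_gt0); apply/eqP.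
have -> : 9 * (3 * (k + 3) - 1) * (3 * (k + 3) - 2) * (3 * (k + 3) - 4) * (3 * (k + 3) - 5) =
          9 * (3 * k + 8) * (3 * k + 7) * (3 * k + 5) * (3 * k + 4) by lia.
transitivity (5 * (cA * dA) * (9 * (3 * k + 8) * (3 * k + 7) * (3 * k + 5) * (3 * k + 4)) * dB).
  by ring.
transitivity (5 * (k + 3) * (k + 3 + 1) ^ 2 * (k + 3 + 2) * (cB * dB) * dA); last by ring.
rewrite countA countB /dA /dB.
have -> : 3 * (k + 3) = (3 * k + 2).+4.+3 by lia.
have -> : k + 3 + 2 = k.+4.+1 by lia.
have -> : k + 3 + 1 = k.+4 by lia.
rewrite !addn2 !addn3 !factS.
ring.
Qed.

Lemma card_SYT n : #|[set T : filling n | is_SYT T]| = nwords (n, 0, 0) (3 * n).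
Proof.
transitivity #|[set T : filling n | is_SYT T && predT T]|.
  by apply: eq_card => T; rewrite !inE andbT.
by rewrite (@card_SYT_words n predT predT) //; apply: eq_count => w; rewrite andbT.
Qed.

Theorem mainTheorem6 (n : nat) (hn : (3 <= n)%N) :
  prob_SYT (fun T : filling n => entry T 1 3 == 7%N) =
  ((5 * n * (n + 1) ^ 2 * (n + 2))%:R /
   (9 * (3 * n - 1) * (3 * n - 2) * (3 * n - 4) * (3 * n - 5))%:R : rat)%R.
Proof.
have [k ->] : exists k, n = k + 3 by exists (n - 3); lia.
rewrite /prob_SYT card_SYT (@card_SYT_words _ _ third_zero_at_7); last first.
  by move=> T; exact: entry_event (leq_addl k 3).
rewrite event_count; apply/eqP.
rewrite eqr_div ?pnatr_eq0 -?natrM ?eqr_nat ?nwords_ratio ?nwords_SYT_neq0 //.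
by rewrite !muln_eq0; lia.
Qed.
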